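(* Let $M\in\mathbb{R}^{n\times n}$ be such that the function $x\mapsto x^TMx$ belongs to the class $\mathcal{Q}$, and let $Z=\sum_{P\in\mathcal{P}} P^TMP$, where $\mathcal{P}$ is the set of all $n\times n$ permutation matrices. Then there exists $\alpha>0$ such that $x^TZx=\alpha V(x)$ for all $x\in\mathbb{R}^n$, where $V(x)=\sum_{i=1}^n (x_i-\bar{x})^2$ with $\bar{x}=\frac1n\sum_{i=1}^n x_i$.
   Context: Fix a positive integer $n$. Let $\mathbf{e}\in\mathbb{R}^n$ be the all-ones vector. A square matrix is stochastic if it is entrywise nonnegative and each row sums to $1$. Let $\mathcal{A}\subset\mathbb{R}^{n\times n}$ be the set of stochastic matrices $A=(a_{ij})$ such that: (i) $a_{ii}>0$ for all $i$; (ii) all positive entries in any given row of $A$ are equal; (iii) $a_{ij}>0$ if and only if $a_{ji}>0$; (iv) the graph on $\{1,\dots,n\}$ with edge set $\{(i,j): a_{ij}>0\}$ is connected. The class $\mathcal{Q}$ consists of all functions $Q(x)=x^TMx$ on $\mathbb{R}^n$ where (a) $M$ is nonzero, symmetric and nonnegative definite; (b) $x^TA^TMAx\le x^TMx$ for all $A\in\mathcal{A}$ and $x\in\mathbb{R}^n$; (c) $Q(\mathbf{e})=0$ (equivalently $M\mathbf{e}=0$). For a permutation $\sigma$ of $\{1,\dots,n\}$, the permutation matrix $P_\sigma$ is defined by $(P_\sigma x)_i=x_{\sigma(i)}$; $\mathcal{P}$ is the set of all such matrices. *)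

From mathcomp Require Import all_boot all_order all_algebra all_fingroup.
From mathcomp Require Import reals.
Set Implicit Arguments. Unset Strict Implicit. Unset Printing Implicit Defensive.
Import Order.TTheory GRing.Theory Num.Theory.
Local Open Scope ring_scope.

Section Defs.
Variable R : realType.
Variable n : nat.

Definition qform (M : 'M[R]_n) (x : 'cV[R]_n) : R := (x^T *m M *m x) 0 0.

Definition ones : 'cV[R]_n := const_mx 1.

Definition stochastic (A : 'M[R]_n) : Prop :=
  (forall i j, 0 <= A i j) /\ (forall i, \sum_j A i j = 1).

Definition classA (A : 'M[R]_n) : Prop :=
  [/\ stochastic A,
      (forall i, 0 < A i i),
      (forall i j k, 0 < A i j -> 0 < A i k -> A i j = A i k),
      (forall i j, 0 < A i j <-> 0 < A j i) &
      (forall i j, connect (fun a b : 'I_n => 0 < A a b) i j)].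

Definition nonneg_def (M : 'M[R]_n) : Prop := forall x, 0 <= qform M x.

(* M defines a function x |-> x^T M x in the class \mathcal{Q} *)
Definition classQ (M : 'M[R]_n) : Prop :=
  [/\ M != 0, M^T = M, nonneg_def M,
      (forall A x, classA A -> qform (A^T *m M *m A) x <= qform M x) &
      qform M ones = 0].

(* permutation matrix: (P_s x)_i = x_(s i) *)
Definition permmx (s : 'S_n) : 'M[R]_n := \matrix_(i, j) (s i == j)%:R.

Definition xbar (x : 'cV[R]_n) : R := (\sum_i x i 0) / n%:R.

Definition V (x : 'cV[R]_n) : R := \sum_i (x i 0 - xbar x) ^+ 2.

End Defs.
Arguments permmx {R n} s.
Arguments qform {R n} M x.
Arguments xbar {R n} x.
Arguments V {R n} x.
Arguments classQ {R n} M.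
Arguments classA {R n} A.
Arguments ones {R n}.

From mathcomp Require Import all_boot all_order all_algebra all_fingroup.
From mathcomp Require Import reals.
From mathcomp Require Import ring lra.
Set Implicit Arguments. Unset Strict Implicit. Unset Printing Implicit Defensive.

(* Z is invariant under simultaneous permutation of rows and columns, so by
   2-transitivity of the symmetric group it has one value c on the diagonal and
   one value d off it.  Since P e = e, Z e = 0 as well, which forces
   c + (n - 1) d = 0, and then x^T Z x = c n / (n - 1) V(x).  Finally
   n c = tr Z = n! tr M > 0, because a nonzero positive semidefinite matrix has
   positive trace (n >= 2 holds since for n = 1 the condition M e = 0 would
   make M zero). *)
Import Order.TTheory GRing.Theory Num.Theory.
Local Open Scope ring_scope.

Section QuadraticForms.
Variables (R : realType) (n : nat).
Implicit Types (M : 'M[R]_n) (x : 'cV[R]_n).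

Lemma qformE M x : qform M x = \sum_i \sum_j M i j * (x i 0 * x j 0).
Proof.
rewrite /qform mxE exchange_big; apply: eq_bigr => j _.
rewrite mxE mulr_suml; apply: eq_bigr => i _; rewrite !mxE; ring.
Qed.

Lemma qform_ones M : qform M ones = \sum_i \sum_j M i j.
Proof.
by rewrite qformE; apply: eq_bigr => i _; apply: eq_bigr => j _; rewrite !mxE !mulr1.
Qed.

Lemma qform_delta M i : qform M (delta_mx i 0) = M i i.
Proof. by rewrite /qform trmx_delta -rowE -colE !mxE. Qed.

Lemma qform_delta2 M i j (t : R) :
  qform M (delta_mx i 0 + t *: delta_mx j 0) = M i i + t * (M i j + M j i) + t ^+ 2 * M j j.
Proof.
rewrite /qform [(_ + _)^T]linearD /= [(t *: _)^T]linearZ /= !mulmxDl !mulmxDr.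
rewrite -!scalemxAl -!scalemxAr !trmx_delta -!rowE -!colE !mxE; ring.
Qed.

Lemma psd_offdiag_eq0 M i j : M^T = M -> nonneg_def M ->
  M i i = 0 -> M j j = 0 -> M i j = 0.
Proof.
move=> Msym Mpsd Mii Mjj; have Mji : M j i = M i j by rewrite -[in RHS]Msym mxE.
have := Mpsd (delta_mx i 0 + (- M i j) *: delta_mx j 0).
rewrite qform_delta2 Mii Mjj Mji => h.
by apply/eqP; rewrite -sqrf_eq0 eq_le sqr_ge0 andbT; nra.
Qed.

Lemma psd_mxtrace_gt0 M : M != 0 -> M^T = M -> nonneg_def M -> 0 < \tr M.
Proof.
move=> Mn0 Msym Mpsd; have diag_ge0 i : 0 <= M i i by rewrite -qform_delta.
rewrite lt_def [0 <= _]sumr_ge0 // andbT; apply: contraNneq Mn0 => /eqP tr0.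
have diag0 i : M i i = 0.
  by apply/eqP; move: tr0; rewrite psumr_eq0 // => /allP; apply; rewrite mem_index_enum.
by apply/eqP/matrixP => i j; rewrite mxE psd_offdiag_eq0.
Qed.

Lemma classQ_dim_gt1 M : classQ M -> (1 < n)%N.
Proof.
case=> Mn0 Msym Mpsd _ Mones; rewrite ltnNge; apply/negP => n_le1.
have ord_eq (i j : 'I_n) : i = j.
  apply: ord_inj; move: (leq_trans (ltn_ord i) n_le1) (leq_trans (ltn_ord j) n_le1).
  by rewrite !ltnS !leqn0 => /eqP-> /eqP->.
suff : \tr M = 0 by move/eqP; rewrite gt_eqF // psd_mxtrace_gt0.
rewrite -Mones qform_ones; apply: eq_bigr => i _.
by rewrite (bigD1 i) //= big1 ?addr0 // => j; rewrite (ord_eq j i) eqxx.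
Qed.

End QuadraticForms.

Section PermInvariant.
Variables (T : Type) (n : nat) (f : 'I_n -> 'I_n -> T).
Hypothesis f_perm : forall (s : 'S_n) i j, f (s i) (s j) = f i j.

Lemma perm_invariant_diag i k : f i i = f k k.
Proof. by rewrite -(f_perm (tperm i k)) tpermL. Qed.

Lemma perm_invariant_offdiag i j k l : i != j -> k != l -> f i j = f k l.
Proof.
(* [tperm i k * tperm m l] sends i to k and j to l. *)
move=> ij kl; set m := tperm i k j.
have mk : m != k by rewrite -(tpermL i k) (inj_eq perm_inj) eq_sym.
by rewrite -(f_perm (tperm i k * tperm m l)) !permM tpermL -/m tpermL tpermD // eq_sym.
Qed.

End PermInvariant.

Section PermSymmetrize.
Variables (R : realType) (n : nat).
Implicit Types (M : 'M[R]_n).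

Definition perm_symmetrize M := \sum_(s : 'S_n) ((permmx s)^T *m M *m permmx s).

Lemma permmx_perm_mx (s : 'S_n) : permmx s = perm_mx s :> 'M[R]_n.
Proof. by apply/matrixP => i j; rewrite !mxE. Qed.

Lemma permmx_conjE M (s : 'S_n) :
  (permmx s)^T *m M *m permmx s = \matrix_(i, j) M ((s^-1)%g i) ((s^-1)%g j).
Proof.
rewrite permmx_perm_mx tr_perm_mx -row_permE -[s in perm_mx s]invgK -col_permE.
by apply/matrixP => i j; rewrite !mxE.
Qed.

Lemma perm_symmetrizeE M i j : perm_symmetrize M i j = \sum_(s : 'S_n) M (s i) (s j).
Proof.
rewrite summxE (reindex_inj invg_inj) /=.
by apply: eq_bigr => s _; rewrite permmx_conjE mxE invgK.
Qed.

Lemma perm_symmetrize_perm M (t : 'S_n) i j :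
  perm_symmetrize M (t i) (t j) = perm_symmetrize M i j.
Proof.
rewrite !perm_symmetrizeE [RHS](reindex_inj (mulgI t)) /=.
by apply: eq_bigr => s _; rewrite !permM.
Qed.

Lemma mxtrace_perm_symmetrize M : \tr (perm_symmetrize M) = n`!%:R * \tr M.
Proof.
rewrite /mxtrace; under eq_bigr do rewrite perm_symmetrizeE.
rewrite exchange_big mulr_natl -card_Sn -sumr_const; apply: eq_bigr => s _.
by rewrite [RHS](reindex_inj (@perm_inj _ s)).
Qed.

Lemma permmx_ones (s : 'S_n) : permmx s *m ones = ones :> 'cV[R]_n.
Proof. by rewrite permmx_perm_mx -row_permE; apply/matrixP => i j; rewrite !mxE. Qed.

Lemma qform_perm_symmetrize_ones M :
  qform (perm_symmetrize M) ones = n`!%:R * qform M ones.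
Proof.
rewrite /qform mulmx_sumr mulmx_suml summxE mulr_natl -card_Sn -sumr_const.
by apply: eq_bigr => s _; rewrite !mulmxA -trmx_mul -mulmxA permmx_ones.
Qed.

End PermSymmetrize.

Lemma V_sum_sqr (R : realType) (n : nat) (x : 'cV[R]_n) : (0 < n)%N ->
  V x = \sum_i x i 0 ^+ 2 - (\sum_i x i 0) ^+ 2 / n%:R.
Proof.
move=> n_gt0; have n0 : n%:R != 0 :> R by rewrite pnatr_eq0 -lt0n.
rewrite /V /xbar; under eq_bigr do rewrite sqrrB.
rewrite big_split sumrB /= sumrMnl -mulr_suml sumr_const card_ord -mulr_natr.
by field.
Qed.

Section TwoValuedForm.
Variables (R : realType) (n : nat) (Z : 'M[R]_n) (c d : R).
Hypothesis Z_two_valued : forall i j, Z i j = if i == j then c else d.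

Lemma qform_two_valued x :
  qform Z x = (c - d) * \sum_i x i 0 ^+ 2 + d * (\sum_i x i 0) ^+ 2.
Proof.
rewrite qformE expr2 big_distrlr mulr_sumr mulr_sumr -big_split.
apply: eq_bigr => i _ /=; rewrite mulr_sumr (bigD1 i) //= [in RHS](bigD1 i) //=.
rewrite Z_two_valued eqxx addrA; congr (_ + _); first by ring.
by apply: eq_bigr => j ji; rewrite Z_two_valued eq_sym (negbTE ji) mulrA.
Qed.

Lemma qform_two_valued_V : (1 < n)%N -> qform Z ones = 0 ->
  forall x, qform Z x = c * n%:R / (n%:R - 1) * V x.
Proof.
move=> n_gt1 Zones x; have n_gt0 : (0 < n)%N by apply: ltnW.
have n0 : n%:R != 0 :> R by rewrite pnatr_eq0 -lt0n.
have n1 : n%:R - 1 != 0 :> R by rewrite subr_eq0 pnatr_eq1 gtn_eqF.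
have sum_ones : \sum_(i < n) (ones i 0 : R) = n%:R.
  by rewrite (eq_bigr (fun=> 1)) ?sumr_const ?card_ord // => i _; rewrite mxE.
have sum_ones_sqr : \sum_(i < n) (ones i 0 : R) ^+ 2 = n%:R.
  by rewrite -sum_ones; apply: eq_bigr => i _; rewrite mxE expr1n.
have : (c + d * (n%:R - 1)) * n%:R = 0.
  by rewrite -Zones qform_two_valued sum_ones sum_ones_sqr; ring.
move/eqP; rewrite mulf_eq0 (negbTE n0) orbF addr_eq0 => /eqP c_eq.
by rewrite qform_two_valued V_sum_sqr // c_eq; field; rewrite n0 n1.
Qed.

End TwoValuedForm.

Theorem lemma2 (R : realType) (n : nat) (M : 'M[R]_n) :
  classQ M ->
  let Z := \sum_(s : 'S_n) ((permmx s)^T *m M *m permmx s) in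
  exists2 alpha : R, 0 < alpha & forall x : 'cV[R]_n, qform Z x = alpha * V x.
Proof.
move=> QM Z; have [Mn0 Msym Mpsd _ Mones] := QM.
have n_gt1 := classQ_dim_gt1 QM.
pose i0 : 'I_n := Ordinal (ltnW n_gt1); pose j0 : 'I_n := Ordinal n_gt1.
have Z_perm (s : 'S_n) i j : Z (s i) (s j) = Z i j := perm_symmetrize_perm M s i j.
have Z_two_valued i j : Z i j = if i == j then Z i0 i0 else Z i0 j0.
  case: ifPn => [/eqP-> | ij]; first exact: (@perm_invariant_diag _ _ Z Z_perm).
  by apply: (@perm_invariant_offdiag _ _ Z Z_perm) ij _.
have c_pos : 0 < Z i0 i0.
  have trZ : \tr Z = Z i0 i0 *+ n.
    rewrite /mxtrace (eq_bigr (fun=> Z i0 i0)) ?sumr_const ?card_ord // => i _.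
    by rewrite Z_two_valued eqxx.
  have : 0 < \tr Z.
    rewrite (mxtrace_perm_symmetrize M : \tr Z = _).
    by rewrite pmulr_rgt0 ?ltr0n ?fact_gt0 // psd_mxtrace_gt0.
  by rewrite trZ pmulrn_lgt0 // ltnW.
exists (Z i0 i0 * n%:R / (n%:R - 1)).
  by rewrite divr_gt0 ?mulr_gt0 ?ltr0n ?subr_gt0 ?ltr1n // ltnW.
apply: qform_two_valued_V => //.
by rewrite qform_perm_symmetrize_ones Mones mulr0.
Qed.
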